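(* Let $\mathbb{F}$ be a field, $d\geq3$ and $V$ a vector space over $\mathbb{F}$ of dimension $d+1$. Let $E^*_0,\dots,E^*_d$ be a system of mutually orthogonal idempotents in $\mathrm{End}(V)$ and $A\in\mathrm{End}(V)$ with $E^*_iAE^*_j=0$ if $|i-j|>1$ and $E^*_iAE^*_j\neq0$ if $|i-j|=1$. Assume $A$ is multiplicity-free and bipartite with primitive idempotents $E_0,\dots,E_d$. Let $\theta^*_0,\dots,\theta^*_d\in\mathbb{F}$ be mutually distinct and $A^*=\sum_i\theta^*_iE^*_i$. Assume $E_0$ is normalizing and $(E_0,E_1)$ is a tail. Then there exists $\beta\in\mathbb{F}$ such that $\theta^*_{i-1}-\beta\theta^*_i+\theta^*_{i+1}$ is independent of $i$ for $1\le i\le d-1$.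
   Context: A system of mutually orthogonal idempotents: $E^*_iE^*_j=\delta_{ij}E^*_i$, $\operatorname{rank}E^*_i=1$. $A$ multiplicity-free: $d+1$ distinct eigenvalues in $\mathbb{F}$; the primitive idempotent for an eigenvalue is the projection onto its eigenspace along the other eigenspaces. Bipartite: $\operatorname{tr}(E^*_iA)=0$ for all $i$. $\Delta$: graph on $E_0,\dots,E_d$ with $E_i\neq E_j$ adjacent iff $E_iA^*E_j\neq0$. $(E_0,E_1)$ is a tail if $E_0$ is adjacent to no vertex other than $E_1$ and $E_1$ is adjacent to at most one vertex other than $E_0$. The matrix $Y$ representing $A$ w.r.t. a basis $v_0,\dots,v_d$ satisfies $Av_j=\sum_iY_{ij}v_i$. An eigenvalue $\theta$ of $A$ is normalizing if some basis with $v_i\in E^*_iV$ makes every row sum of the matrix representing $A$ equal to $\theta$; a primitive idempotent is normalizing if its eigenvalue is. *)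

From HB Require Import structures.
From mathcomp Require Import all_boot all_order all_algebra.
Set Implicit Arguments. Unset Strict Implicit. Unset Printing Implicit Defensive.
Import Order.TTheory GRing.Theory Num.Theory.
Local Open Scope ring_scope.

(* End(V) for dim V = n is modelled by 'M[F]_n acting on column vectors
   'cV[F]_n (v |-> M *m v), so matrix product is composition. *)

Definition orth_idem_system (F : fieldType) (n : nat) (Es : 'I_n -> 'M[F]_n) :=
  (forall i j, Es i *m Es j = if i == j then Es i else 0) /\
  (forall i, \rank (Es i) = 1%N).

Definition is_eigval (F : fieldType) (n : nat) (A : 'M[F]_n) (th : F) :=
  exists2 v : 'cV[F]_n, v != 0 & A *m v = th *: v.

Definition mult_free_with (F : fieldType) (n : nat) (A : 'M[F]_n) (th : 'I_n -> F) :=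
  injective th /\ (forall i, is_eigval A (th i)).

Definition prim_idem_of (F : fieldType) (n : nat) (A : 'M[F]_n) (th : 'I_n -> F)
  (i : 'I_n) (E : 'M[F]_n) :=
  (forall v : 'cV[F]_n, A *m v = th i *: v -> E *m v = v) /\
  (forall (j : 'I_n) (v : 'cV[F]_n), j != i -> A *m v = th j *: v -> E *m v = 0).

Definition bipartite (F : fieldType) (n : nat) (Es : 'I_n -> 'M[F]_n) (A : 'M[F]_n) :=
  forall i, \tr (Es i *m A) = 0.

Definition Delta_adj (F : fieldType) (n : nat) (E : 'I_n -> 'M[F]_n) (As : 'M[F]_n)
  (i j : 'I_n) : bool :=
  (i != j) && (E i *m As *m E j != 0).

Definition is_tail (F : fieldType) (n : nat) (E : 'I_n -> 'M[F]_n) (As : 'M[F]_n)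
  (a b : 'I_n) :=
  (forall j, Delta_adj E As a j -> j = b) /\
  (#|[set j | Delta_adj E As b j & j != a]| <= 1)%N.

(* theta is normalizing: some basis v_0..v_d (columns of an invertible B) with
   v_i in E^*_i V such that the matrix Y representing A (A v_j = sum_i Y_ij v_i)
   has all row sums equal to theta *)
Definition normalizing (F : fieldType) (n : nat) (Es : 'I_n -> 'M[F]_n) (A : 'M[F]_n)
  (theta : F) :=
  exists B : 'M[F]_n,
    [/\ B \in unitmx,
        (forall i, Es i *m col i B = col i B) &
        exists Y : 'M[F]_n, A *m B = B *m Y /\ (forall i, \sum_j Y i j = theta)].

From HB Require Import structures.
From mathcomp Require Import all_boot all_order all_algebra.
From mathcomp Require Import ring zify.
Set Implicit Arguments. Unset Strict Implicit. Unset Printing Implicit Defensive.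
Import Order.TTheory GRing.Theory Num.Theory.
Local Open Scope ring_scope.

(* Conjugating by the normalizing basis B turns A into a tridiagonal matrix Y with zero
   diagonal, nonzero off-diagonal entries c_i = Y_(i,i-1), b_i = Y_(i,i+1) and row sums th_0,
   and turns A* into D = diag(th*_i). The left th_0-eigenvector w of Y has nonzero entries,
   and the row (w_i g_i)_i is a left t-eigenvector of Y iff c_i g_(i-1) + b_i g_(i+1) = t g_i.
   Since E_0 is adjacent only to E_1, the row w D = w E_0 D has components along E_0 and E_1
   only; hence s_i = th*_i - al satisfies the recurrence for th_1, for a suitable al. Since
   E_1 has at most one further neighbour E_h, the row (w_i s_i) D has components along E_0,
   E_1 and E_h only, so s_i^2 + e s_i + f satisfies the recurrence for th_h. Eliminating
   c_i and b_i, every pair (s_(i-1), s_i) lies on one conic symmetric in its two variables;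
   s_(i-1) and s_(i+1) are its two roots at s_i, so by Vieta s_(i-1) + s_(i+1) is affine
   in s_i. *)

Definition sym_conic (F : fieldType) (rho sig tau x y : F) :=
  x ^+ 2 + y ^+ 2 + rho * x * y + sig * (x + y) + tau.

Lemma sym_conicC (F : fieldType) (rho sig tau x y : F) :
  sym_conic rho sig tau x y = sym_conic rho sig tau y x.
Proof. by rewrite /sym_conic; ring. Qed.

Lemma sym_conic_other_root (F : fieldType) (k th eta B C c b x y z : F) :
  k != 0 -> th != 0 -> th + k != 0 -> c + b = k -> b != 0 -> z != x ->
  c * x + b * z = th * y -> c * x ^+ 2 + b * z ^+ 2 = eta * y ^+ 2 + B * y + C ->
  let Q := sym_conic (- (eta + k) / th) (- B / (th + k)) (- C / k) in
  Q x y = 0 -> x + z = (eta + k) / th * y + B / (th + k) /\ Q z y = 0.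
Proof.
move=> k0 th0 thk0 cbk b0 zx lin quad Q Qxy.
pose x' := (eta + k) / th * y + B / (th + k) - x.
(* Both z and the other root x' of Q(., y) solve the equation
   th y (x + u) - k x u = eta y^2 + B y + C, which is linear in u. *)
have z_root : th * y * (x + z) - k * x * z = eta * y ^+ 2 + B * y + C.
  by rewrite -quad -cbk -lin; ring.
have x'_root : th * y * (x + x') - k * x * x' - (eta * y ^+ 2 + B * y + C) = k * Q x y.
  by rewrite /x' /Q /sym_conic; field; rewrite th0 thk0 k0.
have : b * (z - x) * (z - x') = 0.
  rewrite Qxy mulr0 in x'_root; move/eqP: x'_root; rewrite subr_eq0 => /eqP x'_root.
  have -> : b * (z - x) = th * y - k * x by rewrite -lin -cbk; ring.
  have -> : (th * y - k * x) * (z - x') =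
    (th * y * (x + z) - k * x * z) - (th * y * (x + x') - k * x * x') by ring.
  by rewrite z_root x'_root subrr.
move/eqP; rewrite !mulf_eq0 (negbTE b0) subr_eq0 (negbTE zx) /= subr_eq0 => /eqP zE.
split; first by rewrite zE /x'; ring.
by rewrite -[RHS]Qxy zE /x' /Q /sym_conic; ring.
Qed.

Section AffineRecurrence.
Variables (F : fieldType) (d : nat) (c b s : nat -> F) (k th eta e f : F).
Hypothesis d_ge3 : (3 <= d)%N.
Hypothesis cb_sum : forall i, (i <= d)%N -> c i + b i = k.
Hypothesis c0 : c 0%N = 0.
Hypothesis b_neq0 : forall i, (i < d)%N -> b i != 0.
Hypothesis s_inj : forall i j, (i <= d)%N -> (j <= d)%N -> s i = s j -> i = j.
Hypothesis s_rec : forall i, (i <= d)%N -> c i * s i.-1 + b i * s i.+1 = th * s i.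
Hypothesis sq_rec : forall i, (i <= d)%N ->
  c i * (s i.-1 ^+ 2 + e * s i.-1 + f) + b i * (s i.+1 ^+ 2 + e * s i.+1 + f) =
  eta * (s i ^+ 2 + e * s i + f).

Let B := eta * e - e * th.
Let C := eta * f - f * k.

Lemma quadratic_rec i : (i <= d)%N ->
  c i * s i.-1 ^+ 2 + b i * s i.+1 ^+ 2 = eta * s i ^+ 2 + B * s i + C.
Proof.
move=> id; transitivity (c i * (s i.-1 ^+ 2 + e * s i.-1 + f) +
    b i * (s i.+1 ^+ 2 + e * s i.+1 + f) - e * (c i * s i.-1 + b i * s i.+1) - f * (c i + b i)).
  by ring.
by rewrite sq_rec // s_rec // cb_sum // /B /C; ring.
Qed.

Lemma rec_b0 : b 0%N = k.
Proof. by rewrite -(cb_sum (leq0n d)) c0 add0r. Qed.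

Lemma rec_k_neq0 : k != 0.
Proof. by rewrite -rec_b0 b_neq0 //; lia. Qed.

Lemma rec_s1 : k * s 1%N = th * s 0%N.
Proof. by rewrite -s_rec // c0 mul0r add0r rec_b0. Qed.

Lemma rec_th_neq0 : th != 0.
Proof.
apply/negP => /eqP th0.
have s1 : s 1%N = 0.
  by apply/eqP; move: rec_s1; rewrite th0 mul0r => /eqP; rewrite mulf_eq0 (negbTE rec_k_neq0).
have s3 : s 3%N = 0.
  have /eqP := s_rec (ltnW d_ge3); rewrite th0 mul0r /= s1 mulr0 add0r.
  by rewrite mulf_eq0 (negbTE (b_neq0 _)) //= => /eqP.
by have := s_inj (ltnW (ltnW d_ge3)) d_ge3; rewrite s1 s3 => /(_ erefl).
Qed.

Lemma rec_th_add_k_neq0 : th + k != 0.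
Proof.
apply/negP => /eqP thk; have thE : th = - k by apply/eqP; rewrite -subr_eq0 opprK thk.
have s1 : s 1%N = - s 0%N by apply: (mulfI rec_k_neq0); rewrite rec_s1 thE; ring.
have s2 : s 2%N = s 0%N.
  have b1 : b 1%N != 0 by apply: b_neq0; lia.
  apply: (mulfI b1); apply: (addrI (c 1%N * s 0%N)); rewrite -mulrDl cb_sum; last lia.
  have d1 : (1 <= d)%N by lia.
  by have /= -> := s_rec d1; rewrite s1 thE; ring.
have d2 : (2 <= d)%N by lia.
by move: (s_inj d2 (leq0n d) s2).
Qed.

Let Q := sym_conic (- (eta + k) / th) (- B / (th + k)) (- C / k).

Lemma conic_step i : (i < d)%N -> Q (s i.-1) (s i) = 0 ->
  s i.-1 + s i.+1 = (eta + k) / th * s i + B / (th + k) /\ Q (s i.+1) (s i) = 0.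
Proof.
move=> id; apply: (sym_conic_other_root (c := c i) (b := b i) rec_k_neq0 rec_th_neq0
  rec_th_add_k_neq0).
- exact/cb_sum/ltnW.
- exact: b_neq0.
- by apply/eqP => /s_inj; move=> /(_ id (leq_trans (leq_pred i) (ltnW id))); lia.
- exact/s_rec/ltnW.
- exact/quadratic_rec/ltnW.
Qed.

Lemma conic_invariant i : (i < d)%N -> Q (s i) (s i.+1) = 0.
Proof.
elim: i => [_ | i IH id].
  have s1 : s 1%N = th * s 0%N / k by rewrite -rec_s1 mulrC mulKf ?rec_k_neq0.
  have := quadratic_rec (leq0n d); rewrite /= c0 mul0r add0r rec_b0 s1 => quad0.
  rewrite /Q /sym_conic; apply: (mulfI rec_k_neq0).
  rewrite mulr0 -(subrr (eta * s 0%N ^+ 2 + B * s 0%N + C)) -{1}quad0.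
  by field; rewrite rec_k_neq0 rec_th_neq0 rec_th_add_k_neq0.
have [_ Q2] := conic_step id (IH (ltnW id)).
by rewrite /Q sym_conicC.
Qed.

Lemma affine_rec_of_quadratic_rec :
  exists beta delta, forall i, (1 <= i <= d.-1)%N -> s i.-1 + s i.+1 = beta * s i + delta.
Proof.
exists ((eta + k) / th), (B / (th + k)) => i /andP[i1 id].
have id' : (i < d)%N by lia.
have := conic_invariant (_ : i.-1 < d)%N; rewrite prednK // => /(_ (ltnW id')) Qi.
exact: (conic_step id' Qi).1.
Qed.

End AffineRecurrence.

Lemma prod_mulmx_eigvec (F : fieldType) (n : nat) (A : 'M[F]_n.+1) (c : 'I_n.+1 -> F)
    (P : pred 'I_n.+1) (v : 'cV_n.+1) t :
  A *m v = t *: v ->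
  (\prod_(l | P l) (A - (c l)%:M)) *m v = (\prod_(l | P l) (t - c l)) *: v.
Proof.
move=> Av; elim/big_rec2: _ => [|l M u _ IH]; first by rewrite mul1mx scale1r.
rewrite -mulmxE -mulmxA IH -scalemxAr mulmxBl Av mul_scalar_mx -scalerBl scalerA.
by rewrite mulrC.
Qed.

Definition colsmx (F : fieldType) (n : nat) (v : 'I_n -> 'cV[F]_n) : 'M[F]_n :=
  \matrix_(i, j) v j i 0.

Lemma colsmx_mul (F : fieldType) (n m : nat) (M : 'M[F]_(m, n)) (v : 'I_n -> 'cV[F]_n) i j :
  (M *m colsmx v) i j = (M *m v j) i 0.
Proof. by rewrite !mxE; apply: eq_bigr => l _; rewrite mxE. Qed.

Lemma colsmx_mul_inj (F : fieldType) (n m : nat) (M1 M2 : 'M[F]_(m, n))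
    (v : 'I_n -> 'cV[F]_n) :
  colsmx v \in unitmx -> (forall j, M1 *m v j = M2 *m v j) -> M1 = M2.
Proof.
move=> vU Mv; rewrite -(mulmxK vU M1) -(mulmxK vU M2); congr (_ *m _).
by apply/matrixP => i j; rewrite !colsmx_mul Mv.
Qed.

Lemma eigvecs_unitmx (F : fieldType) (n : nat) (A : 'M[F]_n.+1) (th : 'I_n.+1 -> F)
    (v : 'I_n.+1 -> 'cV[F]_n.+1) :
  injective th -> (forall j, v j != 0) -> (forall j, A *m v j = th j *: v j) ->
  colsmx v \in unitmx.
Proof.
move=> th_inj v_neq0 Av.
rewrite -unitmx_tr -row_free_unit -kermx_eq0; apply/rowV0P => x /sub_kermxP xV.
have comb0 : \sum_l x 0 l *: v l = 0.
  rewrite -[RHS]trmx0 -xV trmx_mul trmxK.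
  apply/colP => i; rewrite !mxE summxE; apply: eq_bigr => l _.
  by rewrite !mxE mulrC.
apply/rowP => j; rewrite mxE.
(* The product of the A - th l, l != j, kills every v l except v j. *)
pose P := \prod_(l | l != j) (A - (th l)%:M).
have := congr1 (mulmx P) comb0.
rewrite mulmx0 mulmx_sumr (bigD1 j) //= big1 => [|l lj]; last first.
  by rewrite -scalemxAr (prod_mulmx_eigvec _ _ (Av l)) (bigD1 l) //= subrr mul0r !scale0r scaler0.
rewrite addr0 -scalemxAr (prod_mulmx_eigvec _ _ (Av j)) scalerA => /eqP.
rewrite scaler_eq0 (negbTE (v_neq0 j)) orbF mulf_eq0 => /orP[/eqP //|].
rewrite prodf_seq_eq0 => /hasP[l _ /andP[lj]].
by rewrite subr_eq0 => /eqP /th_inj lE; rewrite lE eqxx in lj.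
Qed.

Section PrimitiveIdempotents.
Variables (F : fieldType) (n : nat) (A : 'M[F]_n.+1) (th : 'I_n.+1 -> F)
  (E : 'I_n.+1 -> 'M[F]_n.+1).
Hypothesis A_mult_free : mult_free_with A th.
Hypothesis E_prim : forall i, prim_idem_of A th i (E i).

Lemma prim_idem_eigenbasis : exists v : 'I_n.+1 -> 'cV[F]_n.+1,
  [/\ colsmx v \in unitmx, forall j, A *m v j = th j *: v j &
      forall i j, E i *m v j = if i == j then v j else 0].
Proof.
have [th_inj th_eig] := A_mult_free.
have [v vP] : exists v : 'I_n.+1 -> 'cV[F]_n.+1, forall j, v j != 0 /\ A *m v j = th j *: v j.
  apply: (@fin_all_exists _ (fun _ => _) (fun j u => u != 0 /\ A *m u = th j *: u)) => j.
  by have [u u0 Au] := th_eig j; exists u.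
exists v; split=> [|j|i j]; first exact: eigvecs_unitmx (fun j => (vP j).1) (fun j => (vP j).2).
  exact: (vP j).2.
case: eqP => [<-|/eqP ij]; first exact: (E_prim i).1 (vP i).2.
by apply: (E_prim i).2 (vP j).2; rewrite eq_sym.
Qed.

Lemma prim_idem_sum : \sum_i E i = 1.
Proof.
have [v [vU _ Ev]] := prim_idem_eigenbasis.
apply: (colsmx_mul_inj vU) => j; rewrite mulmx_suml (bigD1 j) //= big1 => [|i ij].
  by rewrite Ev eqxx addr0 mul1mx.
by rewrite Ev (negbTE ij).
Qed.

Lemma prim_idem_mulA i : E i *m A = th i *: E i.
Proof.
have [v [vU Av Ev]] := prim_idem_eigenbasis.
apply: (colsmx_mul_inj vU) => j; rewrite -mulmxA Av -scalemxAr -!scalemxAl Ev.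
by case: eqP => [->|_]; rewrite ?scaler0.
Qed.

Lemma mulA_prim_idem i : A *m E i = th i *: E i.
Proof.
have [v [vU Av Ev]] := prim_idem_eigenbasis.
apply: (colsmx_mul_inj vU) => j; rewrite -mulmxA Ev -scalemxAl Ev.
by case: eqP => [->|_]; rewrite ?scaler0 ?mulmx0 // Av.
Qed.

End PrimitiveIdempotents.

Lemma val_inord (d m : nat) : ((@inord d m) : nat) = if (m < d.+1)%N then m else 0%N.
Proof. by rewrite /inord val_insubd. Qed.

Lemma tridiag_sum (F : fieldType) (d : nat) (M : 'M[F]_d.+1) (f : nat -> F) (i : nat) :
  (2 <= d)%N -> (forall i j : 'I_d.+1, ~~ ((i.+1 == j) || (j.+1 == i)) -> M i j = 0) ->
  (i <= d)%N ->
  \sum_j M (inord i) j * f j =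
    M (inord i) (inord i.-1) * f i.-1 + M (inord i) (inord i.+1) * f i.+1.
Proof.
move=> d_ge2 M_tri id.
have neigh_neq : (inord i.+1 : 'I_d.+1) != inord i.-1.
  by rewrite -val_eqE /= !val_inord; case: ifP => ?; case: ifP => ?; apply/eqP; lia.
rewrite (bigD1 (inord i.-1)) //= (bigD1 (inord i.+1)) //= big1 ?addr0.
  rewrite val_inord ifT; last lia.
  case: (ltnP i d) => hi; first by rewrite val_inord ifT.
  have -> : i = d by lia.
  rewrite (M_tri (inord d) (inord d.+1)) ?mul0r // !val_inord; repeat case: ifP => ?; lia.
move=> j /andP[ja jb]; rewrite M_tri ?mul0r //.
have := ltn_ord j; move: ja jb; rewrite -!val_eqE /= !val_inord.
by repeat case: ifP => ?; lia.
Qed.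

Section Tridiagonal.
Variables (F : fieldType) (d : nat) (Y : 'M[F]_d.+1) (k : F).
Hypothesis d_ge2 : (2 <= d)%N.
Hypothesis Y_tridiag : forall i j : 'I_d.+1, ~~ ((i.+1 == j) || (j.+1 == i)) -> Y i j = 0.
Hypothesis Y_adj_neq0 : forall i j : 'I_d.+1, (i.+1 == j) || (j.+1 == i) -> Y i j != 0.
Hypothesis Y_rowsum : forall i, \sum_j Y i j = k.

Definition Ynat (i j : nat) := Y (inord i) (inord j).
Definition cY i := Ynat i i.-1.
Definition bY i := Ynat i i.+1.

Lemma cY0 : cY 0 = 0.
Proof. by rewrite /cY /Ynat Y_tridiag // !val_inord /=; lia. Qed.

Lemma cY_add_bY i : (i <= d)%N -> cY i + bY i = k.
Proof.
move=> id; rewrite -(Y_rowsum (inord i)).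
have := tridiag_sum (fun=> 1) d_ge2 Y_tridiag id; rewrite !mulr1 => <-.
by under eq_bigr do rewrite mulr1.
Qed.

Lemma bY_neq0 i : (i < d)%N -> bY i != 0.
Proof. by move=> id; rewrite /bY /Ynat Y_adj_neq0 // !val_inord !ifT //; lia. Qed.

Lemma cY_neq0 i : (0 < i <= d)%N -> cY i != 0.
Proof. by move=> id; rewrite /cY /Ynat Y_adj_neq0 // !val_inord !ifT //; lia. Qed.

(* Ynat wraps around at d.+1, which inord sends to 0. *)
Lemma bY_last : bY d = 0.
Proof. by rewrite /bY /Ynat Y_tridiag // !val_inord; repeat case: ifP => ?; lia. Qed.

Lemma Ynat_last : Ynat d.+1 d = 0.
Proof. by rewrite /Ynat Y_tridiag // !val_inord; repeat case: ifP => ?; lia. Qed.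

(* wt i Y_(i,j) = wt j Y_(j,i) (wt_pred, wt_succ): diag(wt) symmetrizes Y, so the
   left eigenvectors of Y are the weighted rows wrow g of its right eigenvectors g. *)
Fixpoint wt (i : nat) : F := if i is i'.+1 then wt i' * bY i' / cY i'.+1 else 1.

Lemma wt_neq0 i : (i <= d)%N -> wt i != 0.
Proof.
elim: i => [|i IH] id /=; first exact: oner_neq0.
by rewrite !mulf_neq0 ?IH ?bY_neq0 ?invr_eq0 ?cY_neq0 //; lia.
Qed.

Lemma wt_pred j : (j <= d)%N -> wt j.-1 * Ynat j.-1 j = wt j * cY j.
Proof. by case: j => [|j] jd //=; rewrite /cY /= -/(bY j) mulfVK // cY_neq0 //; lia. Qed.

Lemma wt_succ j : (j <= d)%N -> wt j.+1 * Ynat j.+1 j = wt j * bY j.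
Proof.
move=> jd; case: (ltnP j d) => hj.
  by rewrite /= -[Ynat j.+1 j]/(cY j.+1) mulfVK // cY_neq0 //; lia.
have -> : j = d by lia.
by rewrite Ynat_last bY_last !mulr0.
Qed.

Definition wrow (g : nat -> F) : 'rV[F]_d.+1 := \row_(j < d.+1) (wt j * g j).

Lemma wrow_inord g j : (j <= d)%N -> wrow g 0 (inord j) = wt j * g j.
Proof. by move=> jd; rewrite mxE inordK. Qed.

Lemma wrow_mulY g j : (j <= d)%N ->
  (wrow g *m Y) 0 (inord j) = wt j * (cY j * g j.-1 + bY j * g j.+1).
Proof.
move=> jd; transitivity (\sum_i Y^T (inord j) i * (wt i * g i)).
  by rewrite mxE; apply: eq_bigr => i _; rewrite !mxE mulrC.
rewrite (tridiag_sum (fun m => wt m * g m) d_ge2) //; last first.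
  by move=> a b ab; rewrite mxE Y_tridiag // orbC.
have eT a b : Y^T (inord j) (inord a) * (wt a * b) = wt a * Ynat a j * b.
  by rewrite mxE mulrCA mulrA.
by rewrite !eT wt_pred // wt_succ // -!mulrA -mulrDr.
Qed.

Lemma wrow_eigP g t : wrow g *m Y = t *: wrow g <->
  (forall j, (j <= d)%N -> cY j * g j.-1 + bY j * g j.+1 = t * g j).
Proof.
split=> [gY j jd | rec].
  have := congr1 (fun r : 'rV_d.+1 => r 0 (inord j)) gY.
  by rewrite /= wrow_mulY // mxE wrow_inord // mulrCA => /(mulfI (wt_neq0 jd)).
apply/rowP => j; have jd : (j <= d)%N by rewrite -ltnS.
by rewrite -(inord_val j) wrow_mulY // mxE wrow_inord // rec // mulrCA.
Qed.

Lemma wrow1_eig : wrow (fun=> 1) *m Y = k *: wrow (fun=> 1).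
Proof. by apply/wrow_eigP => j jd; rewrite !mulr1 cY_add_bY. Qed.

Lemma wrowE (r : 'rV[F]_d.+1) : r = wrow (fun j => r 0 (inord j) / wt j).
Proof.
apply/rowP => j; rewrite mxE inord_val mulrC divfK // wt_neq0 // -ltnS.
exact: ltn_ord.
Qed.

Lemma rec_eq0 (g : nat -> F) t :
  (forall j, (j <= d)%N -> cY j * g j.-1 + bY j * g j.+1 = t * g j) ->
  g 0%N = 0 -> forall j, (j <= d)%N -> g j = 0.
Proof.
move=> rec g0.
have step j : (j < d)%N -> g j = 0 -> g j.-1 = 0 -> g j.+1 = 0.
  move=> jd gj gj'; have := rec j (ltnW jd); rewrite gj gj' !mulr0 add0r => /eqP.
  by rewrite mulf_eq0 (negbTE (bY_neq0 jd)) => /eqP.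
suff pair j : (j < d)%N -> g j = 0 /\ g j.+1 = 0.
  move=> j jd; case: (ltnP j d) => [/pair[] //|dj].
  have -> : j = d.-1.+1 by lia.
  by apply: (pair d.-1 _).2; lia.
elim: j => [d0 | j IH jd]; first by split=> //; apply: step.
have [gj gj1] := IH (ltnW jd); split=> //; exact: step.
Qed.

Lemma left_eig_eq0 (r : 'rV[F]_d.+1) t : r *m Y = t *: r -> r 0 (inord 0) = 0 -> r = 0.
Proof.
rewrite {1 2}[r]wrowE => /wrow_eigP rec r0; apply/rowP => j.
have jd : (j <= d)%N by rewrite -ltnS.
rewrite {1}[r]wrowE !mxE (rec_eq0 rec) ?mulr0 //.
by rewrite r0 mul0r.
Qed.

Lemma left_eig_colinear (p q : 'rV[F]_d.+1) t :
  p *m Y = t *: p -> q *m Y = t *: q -> q 0 (inord 0) != 0 ->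
  p = (p 0 (inord 0) / q 0 (inord 0)) *: q.
Proof.
move=> pY qY q0; apply/eqP; rewrite -subr_eq0; apply/eqP; apply: (left_eig_eq0 (t := t)).
  by rewrite mulmxBl pY -scalemxAl qY scalerBr !scalerA [_ * t]mulrC.
by rewrite !mxE divfK // subrr.
Qed.

Lemma inord1_neq0 : (inord 1 : 'I_d.+1) != ord0.
Proof. by rewrite -val_eqE /= inordK //; lia. Qed.

Section DualIdempotents.
Variables (th : 'I_d.+1 -> F) (Eh : 'I_d.+1 -> 'M[F]_d.+1) (ths : 'I_d.+1 -> F).
Hypothesis th_inj : injective th.
Hypothesis Eh_sum : \sum_i Eh i = 1%:M.
Hypothesis Eh_mulY : forall i, Eh i *m Y = th i *: Eh i.
Hypothesis Y_mulEh : forall i, Y *m Eh i = th i *: Eh i.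
Hypothesis k_th0 : k = th ord0.
Hypothesis ths_inj : injective ths.

Let D := diag_mx (\row_i ths i).
Let i1 : 'I_d.+1 := inord 1.
Let w := wrow (fun=> 1).
Let s al j := ths (inord j) - al.

Lemma row_mulEh_eig (x : 'rV[F]_d.+1) i : (x *m Eh i) *m Y = th i *: (x *m Eh i).
Proof. by rewrite -mulmxA Eh_mulY scalemxAr. Qed.

Lemma left_eig_mulEh (r : 'rV[F]_d.+1) j : r *m Y = th j *: r -> r *m Eh j = r.
Proof.
move=> rY; have rEh0 i : i != j -> r *m Eh i = 0.
  move=> ij; apply/eqP; have : (th i - th j) *: (r *m Eh i) = 0.
    by rewrite scalerBl -row_mulEh_eig -mulmxA Eh_mulY -Y_mulEh mulmxA rY -scalemxAl subrr.
  move/eqP; rewrite scaler_eq0 subr_eq0 => /orP[/eqP/th_inj ji|//].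
  by rewrite ji eqxx in ij.
by rewrite -{2}[r]mulmx1 -Eh_sum mulmx_sumr (bigD1 j) //= big1 ?addr0 // => i /rEh0.
Qed.

Lemma row_subEh2 (x : 'rV[F]_d.+1) a b : a != b ->
  x - x *m Eh a - x *m Eh b = \sum_(j | (j != a) && (j != b)) x *m Eh j.
Proof.
move=> ab; rewrite -{1}[x]mulmx1 -Eh_sum mulmx_sumr (bigD1 a) //= (bigD1 b) 1?eq_sym //=.
by rewrite (addrC (x *m Eh a)) addrK (addrC (x *m Eh b)) addrK.
Qed.

Lemma sum_row_mulEh_eig (x : 'rV[F]_d.+1) (P : pred 'I_d.+1) h :
  (forall j, P j -> j != h -> x *m Eh j = 0) ->
  (\sum_(j | P j) x *m Eh j) *m Y = th h *: \sum_(j | P j) x *m Eh j.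
Proof.
move=> xEh0; rewrite mulmx_suml scaler_sumr; apply: eq_bigr => j Pj.
by case: (eqVneq j h) => [->|jh]; [exact: row_mulEh_eig | rewrite xEh0 // mul0mx scaler0].
Qed.

Lemma wrow_mul_dual g : wrow g *m D = wrow (fun j => g j * ths (inord j)).
Proof. by apply/rowP => j; rewrite mul_mx_diag !mxE inord_val mulrA. Qed.

Lemma wrow1_0 : w 0 (inord 0) = 1.
Proof. by rewrite wrow_inord // mulr1. Qed.

Lemma left_eig0_colinear (p : 'rV[F]_d.+1) : p *m Y = th ord0 *: p -> p = p 0 (inord 0) *: w.
Proof.
rewrite -k_th0 => pY; rewrite {1}(left_eig_colinear pY wrow1_eig) ?wrow1_0 ?divr1 //.
exact: oner_neq0.
Qed.

Lemma dual_linear_rec : (forall j : 'I_d.+1, j != ord0 -> j != i1 -> Eh ord0 *m D *m Eh j = 0) ->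
  exists al, forall i, (i <= d)%N -> cY i * s al i.-1 + bY i * s al i.+1 = th i1 * s al i.
Proof.
move=> tail0; pose x := w *m D.
have wEh0 : w *m Eh ord0 = w by apply: left_eig_mulEh; rewrite -k_th0 wrow1_eig.
have x_split : x = x *m Eh ord0 + x *m Eh i1.
  apply/eqP; rewrite -subr_eq0 opprD addrA row_subEh2 1?eq_sym ?inord1_neq0 //.
  rewrite big1 // => j /andP[j0 j1].
  by rewrite /x -wEh0 -!mulmxA (mulmxA (Eh _)) tail0 // mulmx0.
pose al := (x *m Eh ord0) 0 (inord 0).
have xEh0 : x *m Eh ord0 = al *: w by apply: left_eig0_colinear; rewrite row_mulEh_eig.
exists al; apply/wrow_eigP; suff -> : wrow (s al) = x *m Eh i1 by rewrite row_mulEh_eig.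
rewrite -[RHS](addKr (x *m Eh ord0)) -x_split xEh0 /x wrow_mul_dual.
by apply/rowP => j; rewrite !mxE /s; ring.
Qed.

Lemma shift_ths_inj al i j : (i <= d)%N -> (j <= d)%N -> s al i = s al j -> i = j.
Proof.
move=> id jd /(congr1 (+%R^~ al)); rewrite /s !subrK => /ths_inj/(congr1 val).
by rewrite /= !inordK.
Qed.

Lemma dual_quadratic_rec al (h : 'I_d.+1) :
  (forall j : 'I_d.+1, j != h -> j != ord0 -> j != i1 -> Eh i1 *m D *m Eh j = 0) ->
  (forall i, (i <= d)%N -> cY i * s al i.-1 + bY i * s al i.+1 = th i1 * s al i) ->
  exists e f, forall i, (i <= d)%N ->
    cY i * (s al i.-1 ^+ 2 + e * s al i.-1 + f) + bY i * (s al i.+1 ^+ 2 + e * s al i.+1 + f) =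
    th h * (s al i ^+ 2 + e * s al i + f).
Proof.
move=> tail1 rec; pose r := wrow (s al).
have rY : r *m Y = th i1 *: r by apply/wrow_eigP.
have r0 : r 0 (inord 0) != 0.
  rewrite wrow_inord // mul1r; apply/eqP => s0.
  have s1 : s al 1 = 0.
    have /eqP := rec 0%N (leq0n d); rewrite cY0 mul0r add0r /= s0 mulr0.
    have b0 : bY 0 != 0 by apply: bY_neq0; lia.
    by rewrite mulf_eq0 (negbTE b0) => /eqP.
  have d1 : (1 <= d)%N by lia.
  by have := @shift_ths_inj al 0 1 (leq0n d) d1; rewrite s0 s1 => /(_ erefl).
pose y := r *m D.
have v_eig : (y - y *m Eh ord0 - y *m Eh i1) *m Y = th h *: (y - y *m Eh ord0 - y *m Eh i1).
  rewrite row_subEh2 1?eq_sym ?inord1_neq0 //; apply: sum_row_mulEh_eig => j /andP[j0 j1] jh.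
  by rewrite /y -(left_eig_mulEh rY) -!mulmxA (mulmxA (Eh _)) tail1 // mulmx0.
pose a := (y *m Eh ord0) 0 (inord 0).
have yEh0 : y *m Eh ord0 = a *: w by apply: left_eig0_colinear; rewrite row_mulEh_eig.
pose b := (y *m Eh i1) 0 (inord 0) / r 0 (inord 0).
have yEh1 : y *m Eh i1 = b *: r by apply: left_eig_colinear (row_mulEh_eig _ _) rY r0.
exists (al - b), (- a); apply/wrow_eigP.
suff -> : wrow (fun j => s al j ^+ 2 + (al - b) * s al j - a) = y - y *m Eh ord0 - y *m Eh i1.
  exact: v_eig.
by rewrite yEh0 yEh1 /y wrow_mul_dual; apply/rowP => j; rewrite !mxE /s; ring.
Qed.

Lemma dual_affine_rec (h : 'I_d.+1) : (3 <= d)%N ->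
  (forall j : 'I_d.+1, j != ord0 -> j != i1 -> Eh ord0 *m D *m Eh j = 0) ->
  (forall j : 'I_d.+1, j != h -> j != ord0 -> j != i1 -> Eh i1 *m D *m Eh j = 0) ->
  exists beta c, forall i, (1 <= i <= d.-1)%N ->
    ths (inord i.-1) - beta * ths (inord i) + ths (inord i.+1) = c.
Proof.
move=> d_ge3 tail0 tail1; have [al rec] := dual_linear_rec tail0.
have [e [f sq]] := dual_quadratic_rec tail1 rec.
have [beta [delta aff]] :=
  affine_rec_of_quadratic_rec d_ge3 cY_add_bY cY0 bY_neq0 (@shift_ths_inj al) rec sq.
exists beta, (delta + 2%:R * al - beta * al) => i /aff si.
have -> : ths (inord i.-1) - beta * ths (inord i) + ths (inord i.+1) =
  s al i.-1 + s al i.+1 - beta * s al i + 2%:R * al - beta * al by rewrite /s; ring.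
by rewrite si; ring.
Qed.

End DualIdempotents.

End Tridiagonal.

Lemma delta_mulmx_delta (F : fieldType) n (M : 'M[F]_n) i j :
  delta_mx i i *m M *m delta_mx j j = M i j *: delta_mx i j.
Proof.
rewrite -(mul_delta_mx (0 : 'I_1) i) -(mul_delta_mx (0 : 'I_1) j) !mulmxA.
rewrite -(mulmxA _ _ M) -rowE -(mulmxA _ _ (delta_mx j 0)) -colE [col j _]mx11_scalar !mxE.
by rewrite mul_mx_scalar -scalemxAl mul_delta_mx.
Qed.

Lemma mxtrace_delta (F : fieldType) n (i : 'I_n) : \tr (delta_mx i i : 'M[F]_n) = 1.
Proof.
by rewrite -(mul_delta_mx (0 : 'I_1)) mxtrace_mulC mul_delta_mx trace_mx11 mxE.
Qed.

Lemma delta_mx_neq0 (F : fieldType) m n (i : 'I_m) (j : 'I_n) :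
  delta_mx i j != 0 :> 'M[F]_(m, n).
Proof. by apply/eqP => /matrixP /(_ i j); rewrite !mxE !eqxx => /eqP; rewrite oner_eq0. Qed.

Section Conjugation.
Variables (F : fieldType) (n : nat) (B : 'M[F]_n).
Hypothesis B_unit : B \in unitmx.

Definition mxconj (M : 'M[F]_n) := invmx B *m M *m B.

Lemma mxconjM M N : mxconj (M *m N) = mxconj M *m mxconj N.
Proof. by rewrite /mxconj !mulmxA mulmxK. Qed.

Lemma mxconjZ a M : mxconj (a *: M) = a *: mxconj M.
Proof. by rewrite /mxconj -scalemxAr -scalemxAl. Qed.

Lemma mxconj_sum (I : finType) (M : I -> 'M[F]_n) : mxconj (\sum_i M i) = \sum_i mxconj (M i).
Proof. by rewrite /mxconj mulmx_sumr mulmx_suml. Qed.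

Lemma mxconj1 : mxconj 1%:M = 1%:M.
Proof. by rewrite /mxconj mulmx1 mulVmx. Qed.

Lemma mxconj0 : mxconj 0 = 0.
Proof. by rewrite /mxconj mulmx0 mul0mx. Qed.

Lemma mxconj_eq0 M : (mxconj M == 0) = (M == 0).
Proof.
apply/eqP/eqP => [M0 | ->]; last exact: mxconj0.
have -> : M = B *m mxconj M *m invmx B by rewrite /mxconj !mulmxA mulmxV // mul1mx mulmxK.
by rewrite M0 mulmx0 mul0mx.
Qed.

Lemma mxtrace_conj M : \tr (mxconj M) = \tr M.
Proof. by rewrite /mxconj mxtrace_mulC mulmxA mulmxV // mul1mx. Qed.

End Conjugation.

Section NormalizingFrame.
Variables (F : fieldType) (n : nat) (Es : 'I_n -> 'M[F]_n) (A B Y : 'M[F]_n).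
Hypothesis Es_orth : forall i j, Es i *m Es j = if i == j then Es i else 0.
Hypothesis B_unit : B \in unitmx.
Hypothesis Es_colB : forall i, Es i *m col i B = col i B.
Hypothesis AB : A *m B = B *m Y.

Lemma mxconj_Es i : mxconj B (Es i) = delta_mx i i.
Proof.
suff EsB : Es i *m B = B *m delta_mx i i by rewrite /mxconj -mulmxA EsB mulmxA mulVmx // mul1mx.
have colB j : B *m delta_mx j j = col j B *m delta_mx 0 j by rewrite colE -mulmxA mul_delta_mx.
rewrite -{1}[B]mulmx1 mx1_sum_delta !mulmx_sumr (bigD1 i) //= big1 ?addr0 => [|j ji].
  by rewrite colB mulmxA Es_colB.
by rewrite colB mulmxA -Es_colB mulmxA Es_orth eq_sym (negbTE ji) !mul0mx.
Qed.

Lemma mxconjA : mxconj B A = Y.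
Proof. by rewrite /mxconj -mulmxA AB mulKmx. Qed.

Lemma mxconj_sandwich M i j : mxconj B (Es i *m M *m Es j) = mxconj B M i j *: delta_mx i j.
Proof. by rewrite !mxconjM // !mxconj_Es delta_mulmx_delta. Qed.

Lemma frame_entry_eq0 i j : (Y i j == 0) = (Es i *m A *m Es j == 0).
Proof.
rewrite -(mxconj_eq0 B_unit) mxconj_sandwich mxconjA scaler_eq0.
by rewrite (negbTE (delta_mx_neq0 F i j)) orbF.
Qed.

Lemma frame_diag i : Y i i = \tr (Es i *m A).
Proof.
have -> : \tr (Es i *m A) = \tr (Es i *m A *m Es i).
  by rewrite [RHS]mxtrace_mulC mulmxA Es_orth eqxx.
by rewrite -(mxtrace_conj B_unit) mxconj_sandwich mxconjA mxtraceZ mxtrace_delta mulr1.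
Qed.

Lemma mxconj_dual (c : 'I_n -> F) : mxconj B (\sum_i c i *: Es i) = diag_mx (\row_i c i).
Proof.
rewrite mxconj_sum diag_mx_sum_delta; apply: eq_bigr => i _.
by rewrite mxconjZ mxconj_Es mxE.
Qed.

End NormalizingFrame.

Lemma is_tail_prod_eq0 (F : fieldType) n (E : 'I_n -> 'M[F]_n) (As : 'M[F]_n) a b :
  is_tail E As a b ->
  (forall j, j != a -> j != b -> E a *m As *m E j = 0) /\
  exists h, forall j, j != h -> j != a -> j != b -> E b *m As *m E j = 0.
Proof.
move=> [tail_a tail_b]; split=> [j ja jb|].
  apply/eqP; apply: contraNT jb => EAE; apply/eqP/tail_a.
  by rewrite /Delta_adj eq_sym ja.
set S := [set j | Delta_adj E As b j & j != a] in tail_b.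
have [h hS] : exists h, forall j, j != h -> j \notin S.
  have /orP[/eqP/cards0_eq S0 | /cards1P[h S1]] : (#|S| == 0) || (#|S| == 1).
    by case: #|S| tail_b => [|[|]].
  - by exists a => j _; rewrite S0 inE.
  - by exists h => j jh; rewrite S1 inE.
exists h => j jh ja jb; apply/eqP; have := hS j jh.
by rewrite inE /Delta_adj eq_sym jb ja andbT negbK.
Qed.

Theorem corollary9p5 (F : fieldType) (d : nat) (hd : (3 <= d)%N)
  (Es : 'I_d.+1 -> 'M[F]_d.+1) (A : 'M[F]_d.+1)
  (th : 'I_d.+1 -> F) (E : 'I_d.+1 -> 'M[F]_d.+1) (ths : 'I_d.+1 -> F) :
  orth_idem_system Es ->
  (forall i j : 'I_d.+1, ((i.+1 < j) || (j.+1 < i))%N -> Es i *m A *m Es j = 0) ->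
  (forall i j : 'I_d.+1, ((i.+1 == j) || (j.+1 == i))%N -> Es i *m A *m Es j != 0) ->
  mult_free_with A th ->
  (forall i, prim_idem_of A th i (E i)) ->
  bipartite Es A ->
  injective ths ->
  normalizing Es A (th ord0) ->
  is_tail E (\sum_i ths i *: Es i) ord0 (inord 1) ->
  exists beta : F, exists c : F, forall i : nat, (1 <= i <= d.-1)%N ->
    ths (inord i.-1) - beta * ths (inord i) + ths (inord i.+1) = c.
Proof.
move=> [Es_orth _] A_far A_adj A_mf E_prim A_bip ths_inj.
move=> [B [B_unit Es_colB [Y [AB Y_rowsum]]]] /is_tail_prod_eq0 [tail0 [h tail1]].
have conj_tail a j : mxconj B (E a) *m diag_mx (\row_i ths i) *m mxconj B (E j) =
    mxconj B (E a *m (\sum_i ths i *: Es i) *m E j).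
  by rewrite !mxconjM // (mxconj_dual Es_orth B_unit Es_colB).
apply: (@dual_affine_rec F d Y (th ord0) (ltnW hd) _ _ Y_rowsum th (fun i => mxconj B (E i))
  ths _ _ _ _ erefl ths_inj h hd).
- move=> i j ij; apply/eqP; case: (eqVneq i j) => [<-|ij'].
    by rewrite (frame_diag Es_orth B_unit Es_colB AB) A_bip.
  rewrite (frame_entry_eq0 Es_orth B_unit Es_colB AB) A_far //.
  by move: ij ij'; rewrite -val_eqE /=; lia.
- by move=> i j ij; rewrite (frame_entry_eq0 Es_orth B_unit Es_colB AB) A_adj.
- exact: A_mf.1.
- by rewrite -mxconj_sum (prim_idem_sum A_mf E_prim) mxconj1.
- move=> i; rewrite -(mxconjA B_unit AB) -(mxconjM B_unit).
  by rewrite (prim_idem_mulA A_mf E_prim) mxconjZ.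
- move=> i; rewrite -(mxconjA B_unit AB) -(mxconjM B_unit).
  by rewrite (mulA_prim_idem A_mf E_prim) mxconjZ.
- by move=> j j0 j1; rewrite conj_tail tail0 // mxconj0.
- by move=> j jh j0 j1; rewrite conj_tail tail1 // mxconj0.
Qed.
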